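(* Consider the following Markov decision process modelling transmit-power selection in an energy harvesting transmitter. Let $Q_{\max}$ be a positive integer. The state (battery level) at slot $t$ is $Q_t \in \{0,1,\dots,Q_{\max}\}$. In state $Q$ the allowed actions (transmit power levels) form a set $\mathcal{A}_Q \subseteq \{0,1,\dots,Q\}$, where $\mathcal{A}_0=\{0\}$ and, for $Q\ge 1$, every allowed action is positive, i.e. $\mathcal{A}_Q\subseteq\{1,\dots,Q\}$. The harvested energies $p_0,p_1,\dots$ are i.i.d. nonnegative integer random variables with $\Pr\{p_t=p\}>0$ for every $p\in\{0,1,\dots,Q_{\max}\}$. If action $q_t\in\mathcal{A}_{Q_t}$ is taken, the next state is $Q_{t+1}=\min\{Q_t-q_t+p_t,\;Q_{\max}\}$. Then this MDP is ergodic: for every deterministic stationary policy $\beta$ (a map assigning to each state $Q$ an action $\beta(Q)\in\mathcal{A}_Q$), the Markov chain of states induced by playing $\beta$ is irreducible and aperiodic. *)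

From HB Require Import structures.
From mathcomp Require Import all_boot all_order all_algebra.
From mathcomp Require Import all_classical all_reals all_analysis.
Set Implicit Arguments. Unset Strict Implicit. Unset Printing Implicit Defensive.
Import Order.TTheory GRing.Theory Num.Theory.
Import numFieldNormedType.Exports.
Local Open Scope ring_scope.

(* Transition matrix of the battery-level chain under a deterministic stationary
   policy [beta], when harvested energies are i.i.d. with pmf [h] on nat:
   P(i,j) = Pr{ min(i - beta(i) + p, Qmax) = j } = sum_p [min(..)=j] h(p). *)
Definition trans (R : realType) (Qmax : nat) (h : nat -> R)
    (beta : 'I_Qmax.+1 -> nat) : 'M[R]_(Qmax.+1) :=
  \matrix_(i, j) limn (fun n : nat => \sum_(0 <= p < n)
     (if minn (i - beta i + p) Qmax == (j : nat) then h p else 0)).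

Definition irreducible_mx (R : realType) (n : nat) (P : 'M[R]_(n.+1)) : Prop :=
  forall i j : 'I_n.+1, exists m : nat, 0 < (P ^+ m) i j.

Definition aperiodic_mx (R : realType) (n : nat) (P : 'M[R]_(n.+1)) : Prop :=
  forall i : 'I_n.+1, forall d : nat,
    (forall m : nat, (0 < m)%N -> 0 < (P ^+ m) i i -> (d %| m)%N) -> d = 1%N.

From HB Require Import structures.
From mathcomp Require Import all_boot all_order all_algebra.
From mathcomp Require Import all_classical all_reals all_analysis.
From mathcomp Require Import zify.
Set Implicit Arguments. Unset Strict Implicit. Unset Printing Implicit Defensive.
Import Order.TTheory GRing.Theory Num.Theory.
Import numFieldNormedType.Exports.
Local Open Scope classical_set_scope.
Local Open Scope ring_scope.

(* Under any policy the battery can be drained one unit per slot (harvest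
   [beta Q - 1] after spending [beta Q >= 1]), so every state reaches the empty
   state [0] in [Q] steps; from [0] (where [beta 0 = 0]) every state is reached
   in a single step by harvesting exactly that amount.  As [0 -> 0] is itself a
   transition, every state [i] reaches every state in both [i + 1] and [i + 2]
   steps, which gives irreducibility and aperiodicity. *)

Section NonnegativeSeries.
Variables (R : realType) (u : R ^nat) (B : R).
Hypothesis u_ge0 : forall k, 0 <= u k.
Hypothesis psum_le : forall n, \sum_(0 <= k < n) u k <= B.

Lemma psum_le_limn n :
  \sum_(0 <= k < n) u k <= limn (fun n => \sum_(0 <= k < n) u k).
Proof.
have u_nd : nondecreasing_seq (fun n => \sum_(0 <= k < n) u k).
  exact: (@nondecreasing_series _ u predT 0) => k _ _.
apply: nondecreasing_cvgn_le => //; apply: nondecreasing_is_cvgn => //.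
by exists B => _ [m _ <-].
Qed.

Lemma term_le_limn k : u k <= limn (fun n => \sum_(0 <= k < n) u k).
Proof.
apply: le_trans (psum_le_limn k.+1).
by rewrite big_nat_recr //= lerDr sumr_ge0.
Qed.

End NonnegativeSeries.

Section NonnegativeMatrices.
Variables (R : realType) (n : nat).
Implicit Types (P Q : 'M[R]_n.+1).

Definition nonneg_mx P := forall i j, 0 <= P i j.

Lemma mul_nonneg_mx P Q : nonneg_mx P -> nonneg_mx Q -> nonneg_mx (P * Q).
Proof.
by move=> P0 Q0 i j; rewrite -mulmxE mxE sumr_ge0 // => k _; rewrite mulr_ge0.
Qed.

Lemma exp_nonneg_mx P m : nonneg_mx P -> nonneg_mx (P ^+ m).
Proof.
move=> P0; elim: m => [|m IHm] i j; first by rewrite expr0 mxE; case: (i == j).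
by rewrite exprS; apply: mul_nonneg_mx.
Qed.

Lemma mul_nonneg_mx_gt0 k P Q i j : nonneg_mx P -> nonneg_mx Q ->
  0 < P i k -> 0 < Q k j -> 0 < (P * Q) i j.
Proof.
move=> P0 Q0 Pik Qkj; rewrite -mulmxE mxE (bigD1 k) //=.
by rewrite ltr_pwDl ?mulr_gt0 // sumr_ge0 // => l _; rewrite mulr_ge0.
Qed.

Lemma exp_mx_descent_gt0 P m : nonneg_mx P ->
  (forall a, (a < m)%N -> 0 < P (inord a.+1) (inord a)) ->
  forall a, (a <= m)%N -> 0 < (P ^+ a) (inord a) (inord 0).
Proof.
move=> P0 Pdown; elim=> [|a IHa] le_am; first by rewrite expr0 mxE eqxx ltr01.
rewrite exprS; apply: (mul_nonneg_mx_gt0 (k := inord a)) => //.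
- exact: exp_nonneg_mx.
- exact: Pdown.
- exact/IHa/ltnW.
Qed.

Lemma irreducible_aperiodic_of_hub P (s : 'I_n.+1) (k : 'I_n.+1 -> nat) :
  nonneg_mx P -> (forall j, 0 < P s j) -> (forall i, 0 < (P ^+ k i) i s) ->
  irreducible_mx P /\ aperiodic_mx P.
Proof.
move=> P0 Ps Pk.
have reach1 i j : 0 < (P ^+ (k i).+1) i j.
  by rewrite exprSr (mul_nonneg_mx_gt0 (exp_nonneg_mx _ P0) P0 (Pk i) (Ps j)).
have reach2 i j : 0 < (P ^+ (k i).+2) i j.
  by rewrite exprSr (mul_nonneg_mx_gt0 (exp_nonneg_mx _ P0) P0 (reach1 i s) (Ps j)).
split=> [i j|i d d_dvd]; first by exists (k i).+1.
have d1 : (d %| (k i).+1)%N by apply: d_dvd.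
have d2 : (d %| (k i).+2)%N by apply: d_dvd.
by apply/eqP; rewrite -dvdn1 -(dvdn_addr 1 d1) addn1.
Qed.

End NonnegativeMatrices.

Section BatteryChain.
Variables (R : realType) (Qmax : nat) (h : nat -> R) (beta : 'I_Qmax.+1 -> nat).
Hypothesis h_ge0 : forall p, 0 <= h p.
Hypothesis h_sum1 : series h @ \oo --> (1%:R : R).

Lemma series_le1 m : series h m <= 1.
Proof.
have <- : limn (series h) = 1 by rewrite (cvg_lim _ h_sum1).
apply: nondecreasing_cvgn_le.
- exact: (@nondecreasing_series _ h predT 0) => k _ _.
- by apply/cvg_ex; exists 1.
Qed.

Let jump (i j : 'I_Qmax.+1) p :=
  if minn (i - beta i + p) Qmax == (j : nat) then h p else 0.

Let jump_ge0 i j p : 0 <= jump i j p.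
Proof. by rewrite /jump; case: ifP. Qed.

Let jump_psum_le1 i j m : \sum_(0 <= p < m) jump i j p <= 1.
Proof.
apply: le_trans (series_le1 m); rewrite /series /=.
by apply: ler_sum => p _; rewrite /jump; case: ifP.
Qed.

Lemma trans_nonneg : nonneg_mx (trans h beta).
Proof.
move=> i j; rewrite mxE.
by have := psum_le_limn (jump_ge0 i j) (jump_psum_le1 i j) 0; rewrite big_geq.
Qed.

Lemma trans_gt0 (i j : 'I_Qmax.+1) p : 0 < h p ->
  minn (i - beta i + p) Qmax = j -> 0 < trans h beta i j.
Proof.
move=> hp_gt0 land_j; rewrite mxE; apply: lt_le_trans hp_gt0 _.
by have := term_le_limn (jump_ge0 i j) (jump_psum_le1 i j) p; rewrite /jump land_j eqxx.
Qed.

End BatteryChain.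

Theorem proposition1 (R : realType) (Qmax : nat) (HQ : (0 < Qmax)%N)
  (A : nat -> pred nat)
  (HA0 : forall q : nat, A 0%N q = (q == 0%N))
  (HApos : forall Q q : nat, (1 <= Q)%N -> A Q q -> (1 <= q <= Q)%N)
  (h : nat -> R)
  (h_ge0 : forall p : nat, 0 <= h p)
  (h_sum1 : series h @ \oo --> (1%:R : R))
  (h_pos : forall p : nat, (p <= Qmax)%N -> 0 < h p) :
  forall beta : 'I_Qmax.+1 -> nat,
    (forall Q : 'I_Qmax.+1, A Q (beta Q)) ->
    irreducible_mx (trans h beta) /\ aperiodic_mx (trans h beta).
Proof.
move=> beta beta_A.
have P0 := trans_nonneg beta h_ge0 h_sum1.
have beta0 : beta (inord 0) = 0%N.
  by have := beta_A (inord 0); rewrite inordK // HA0 => /eqP.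
have beta_pos a : (1 <= a <= Qmax)%N -> (1 <= beta (inord a) <= a)%N.
  move=> /andP[a_ge1 le_aQ]; have := HApos _ _ _ (beta_A (inord a)).
  by rewrite inordK //; apply.
have from0 (j : 'I_Qmax.+1) : 0 < trans h beta (inord 0) j.
  apply: (trans_gt0 h_ge0 h_sum1 (p := j)); first exact/h_pos/leq_ord.
  by rewrite beta0 inordK //; have := leq_ord j; lia.
have down a : (a < Qmax)%N -> 0 < trans h beta (inord a.+1) (inord a).
  move=> lt_aQ; have := beta_pos a.+1; rewrite lt_aQ => /(_ isT) beta_a.
  apply: (trans_gt0 h_ge0 h_sum1 (p := (beta (inord a.+1)).-1)).
    by apply: h_pos; lia.
  by rewrite !inordK //; lia.
apply: (irreducible_aperiodic_of_hub (k := fun i : 'I_Qmax.+1 => i) P0 from0) => i.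
by have := exp_mx_descent_gt0 P0 down (leq_ord i); rewrite inord_val.
Qed.
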